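(* Let $y,\tilde{y},l,\tilde{l},u,\tilde{u}\in\mathcal{R}(\mathbb{R}^{+},\mathbb{R})$ with $l\leq u$, $\tilde l\leq\tilde u$, $l_0\leq y_0\leq u_0$, $\tilde l_0\leq\tilde y_0\leq\tilde u_0$, and $\inf_{s\leq t}(u_s-l_s)>0$, $\inf_{s\leq t}(\tilde u_s-\tilde l_s)>0$ for all $t\geq0$. Let $(x,k)$ and $(\tilde{x},\tilde{k})$ be the solutions of $RP^u_l(y)$ and $RP^{\tilde{u}}_{\tilde{l}}(\tilde{y})$ respectively. Let $T>0$ and $\|f\|_{<T}=\sup_{0\leq s<T}|f_s|$. Then $$\|k-\tilde{k}\|_{<T}\leq 2\big(\|y-\tilde{y}\|_{<T}+\|l-\tilde{l}\|_{<T}+\|u-\tilde{u}\|_{<T}\big),$$ $$\|x-\tilde{x}\|_{<T}\leq 3\big(\|y-\tilde{y}\|_{<T}+\|l-\tilde{l}\|_{<T}+\|u-\tilde{u}\|_{<T}\big).$$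
   Context: A function $f:\mathbb{R}^+=[0,\infty)\to\mathbb{R}$ is regulated if it has a left limit $f_{t^-}$ at every $t>0$ and a right limit $f_{t^+}$ at every $t\geq0$; $\mathcal{R}(\mathbb{R}^{+},\mathbb{R})$ is the set of regulated functions. Write $\Delta^+f_t=f_{t^+}-f_t$, $a\wedge b=\min(a,b)$, $a\vee b=\max(a,b)$. For a function $\phi$ of bounded variation, $\phi^r_t=\phi^c_t+\sum_{0<s\leq t}(\phi_s-\phi_{s^-})$ is its right-continuous part ($\phi^c$ the continuous part). Two-barrier problem $RP^u_l(y)$ (with $l_0\leq y_0\leq u_0$): $(x,k)$ regulated is a solution if there are $\phi^1,\phi^2$ with (i) $x=y+k$, $k=\phi^1-\phi^2$; (ii) $l\leq x\leq u$; (iii) $\phi^1,\phi^2$ non-decreasing, $\phi^1_0=\phi^2_0=0$; (iv) $\int_{[0,\infty[}\big((x_s-l_s)\wedge(x_{s^+}-l_{s^+})\big)d\phi^{1,r}_s=\int_{[0,\infty[}\big((u_s-x_s)\wedge(u_{s^+}-x_{s^+})\big)d\phi^{2,r}_s=0$; (v) for all $t$, $\sum_{s\leq t}(x_{s^+}-l_{s^+})\Delta^+\phi^1_s=\sum_{s\leq t}(u_s-x_s)\Delta^+\phi^1_s=0$ and $\sum_{s\leq t}(u_{s^+}-x_{s^+})\Delta^+\phi^2_s=\sum_{s\leq t}(x_s-l_s)\Delta^+\phi^2_s=0$. Under the stated hypotheses the solution exists and is unique. *)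

From HB Require Import structures.
From mathcomp Require Import all_boot all_order all_algebra.
From mathcomp Require Import all_classical all_reals all_analysis.
Set Implicit Arguments. Unset Strict Implicit. Unset Printing Implicit Defensive.
Import Order.TTheory GRing.Theory Num.Theory.
Import numFieldNormedType.Exports.
Local Open Scope classical_set_scope.
Local Open Scope ring_scope.

Section Defs.
Context {R : realType}.

Definition rlim (f : R -> R) (t : R) : R := lim (f x @[x --> t^'+]).
Definition llim (f : R -> R) (t : R) : R := lim (f x @[x --> t^'-]).

Definition regulated (f : R -> R) : Prop :=
  (forall t, 0 < t -> cvg (f x @[x --> t^'-])) /\
  (forall t, 0 <= t -> cvg (f x @[x --> t^'+])).

Definition Dplus (f : R -> R) (t : R) : R := rlim f t - f t.

Definition nondecr0 (phi : R -> R) : Prop :=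
  forall s t, 0 <= s -> s <= t -> phi s <= phi t.

Definition cont_part (phi : R -> R) (t : R) : R :=
  phi t - fine (\esum_(s in `]0, t]) (phi s - llim phi s)%:E)
        - fine (\esum_(s in `[0, t[) (Dplus phi s)%:E).

Definition rc_part (phi : R -> R) (t : R) : R :=
  cont_part phi t + fine (\esum_(s in `]0, t]) (phi s - llim phi s)%:E).

Definition stieltjes_zero (phi g : R -> R) : Prop :=
  exists F : cumulative R R,
    (forall t, 0 <= t -> F t = rc_part phi t) /\ (forall t, t < 0 -> F t = 0) /\
    (\int[lebesgue_stieltjes_measure F]_(s in (`[0%R, +oo[ : set R)) (g s)%:E = 0)%E.

Definition is_RP_solution (y l u x k : R -> R) : Prop :=
  regulated x /\ regulated k /\
  exists phi1 phi2 : R -> R,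
    (forall t, 0 <= t -> x t = y t + k t /\ k t = phi1 t - phi2 t) /\
    (forall t, 0 <= t -> l t <= x t <= u t) /\
    (nondecr0 phi1 /\ nondecr0 phi2 /\ phi1 0 = 0 /\ phi2 0 = 0) /\
    stieltjes_zero phi1 (fun s => Num.min (x s - l s) (rlim x s - rlim l s)) /\
    stieltjes_zero phi2 (fun s => Num.min (u s - x s) (rlim u s - rlim x s)) /\
    (forall t, 0 <= t ->
       \esum_(s in `[0, t]) ((rlim x s - rlim l s) * Dplus phi1 s)%:E = 0%E /\
       \esum_(s in `[0, t]) ((u s - x s) * Dplus phi1 s)%:E = 0%E /\
       \esum_(s in `[0, t]) ((rlim u s - rlim x s) * Dplus phi2 s)%:E = 0%E /\
       \esum_(s in `[0, t]) ((x s - l s) * Dplus phi2 s)%:E = 0%E).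

Definition supnT (T : R) (f : R -> R) : \bar R :=
  ereal_sup [set (`|f s|)%:E | s in `[0, T[].

End Defs.

From HB Require Import structures.
From mathcomp Require Import all_boot all_order all_algebra.
From mathcomp Require Import all_classical all_reals all_analysis.
From mathcomp Require Import finmap lra.

(* Write dk := k - kt = (phi1 + psi2) - (phi2 + psi1), where k = phi1 - phi2 and
   kt = psi1 - psi2 are the decompositions of the two solutions, and let K be the
   sum of the distances between the data (y, l, u) and (yt, lt, ut) on [0, T).
   Wherever dk > K + d, x stays more than d above l and xt more than d below ut, so
   phi1 and psi2, the only terms that can make dk grow, are idle: dk does not
   increase on such intervals, does not jump up to the right, and is left upper
   semicontinuous (the Stieltjes measures of phi1 and psi2 charge no atom there).
   Looking at the last time before t at which dk <= K + d thus gives dk t <= K + d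
   for every d > 0. By symmetry |k - kt| <= K, and x - xt = (y - yt) + (k - kt)
   gives |x - xt| <= 2 K, which is sharper than the constants 2 and 3. *)

Set Implicit Arguments. Unset Strict Implicit. Unset Printing Implicit Defensive.
Import Order.TTheory GRing.Theory Num.Theory.
Import numFieldNormedType.Exports.
Local Open Scope classical_set_scope.
Local Open Scope ring_scope.

Section NondecreasingPart.
Context {R : realType}.
Implicit Types (phi : R -> R) (s t : R).

Lemma rc_partE phi t :
  rc_part phi t = phi t - fine (\esum_(s in `[0, t[) (Dplus phi s)%:E).
Proof. by rewrite /rc_part /cont_part addrAC subrK. Qed.

Lemma nondecr0_cvg_at_right phi s : nondecr0 phi -> 0 <= s ->
  cvg (phi x @[x --> s^'+]).
Proof.
move=> nd s0; apply: nondecreasing_at_right_is_cvgr.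
- near=> z => p q; rewrite !in_itv/= => /andP[sp _] /andP[sq _] pq.
  by apply: nd => //; apply: le_trans (ltW sp).
- near=> z; exists (phi s) => ? [w /=]; rewrite in_itv/= => /andP[sw _] <-.
  exact: nd (ltW sw).
Unshelve. all: by end_near. Qed.

Lemma Dplus_ge0 phi s : nondecr0 phi -> 0 <= s -> 0 <= Dplus phi s.
Proof.
move=> nd s0; rewrite /Dplus subr_ge0 /rlim.
apply: limr_ge; first exact: nondecr0_cvg_at_right.
by near=> z; apply: nd.
Unshelve. all: by end_near. Qed.

Lemma esum_eq0_le0 (I : set R) (a : R -> R) s : I s ->
  (\esum_(i in I) (a i)%:E = 0)%E -> a s <= 0.
Proof.
move=> Is a0; suff : ((a s)%:E <= \esum_(i in I) (a i)%:E)%E by rewrite a0 lee_fin.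
by apply: esum_ge; exists [set s]; [split=> // _ -> | rewrite fsbig_set1].
Qed.

Lemma Dplus_eq0 phi (w : R -> R) s : nondecr0 phi -> 0 <= s -> 0 < w s ->
  \esum_(r in `[0, s]) (w r * Dplus phi r)%:E = 0%E -> Dplus phi s = 0.
Proof.
move=> nd s0 ws wD0; apply/eqP; rewrite eq_le Dplus_ge0// andbT.
rewrite -(pmulr_rle0 _ ws); apply: esum_eq0_le0 wD0.
by rewrite /= in_itv/= s0 lexx.
Qed.

End NondecreasingPart.

Section MeasureFacts.
Context {R : realType}.

Lemma ge0_le_integral_nonmeasurable d (T : measurableType d)
    (mu : {measure set T -> \bar R}) (D : set T) (f1 f2 : T -> \bar R) :
  (forall x, D x -> (0 <= f1 x)%E) -> (forall x, D x -> (f1 x <= f2 x)%E) ->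
  (\int[mu]_(x in D) f1 x <= \int[mu]_(x in D) f2 x)%E.
Proof.
move=> f10 f12; rewrite !ge0_integralE//; last first.
  by move=> x Dx; exact: le_trans (f10 _ Dx) (f12 _ Dx).
rewrite ge_ereal_sup// => _ [h /= hf <-]; apply: ereal_sup_ubound; exists h => //= x.
apply: le_trans (hf x) _; rewrite /patch; case: ifP => // /set_mem Dx; exact: f12.
Qed.

Lemma mul_measure_le_integral d (T : measurableType d)
    (mu : {measure set T -> \bar R}) (D A : set T) (g : T -> R) m :
  measurable D -> measurable A -> A `<=` D -> 0 <= m ->
  (forall s, A s -> m <= g s) -> (forall s, D s -> 0 <= g s) ->
  (m%:E * mu A <= \int[mu]_(s in D) (g s)%:E)%E.
Proof.
move=> mD mA AD m0 Ag Dg.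
rewrite -(setIidl AD) -integral_indic//.
rewrite -(@integralZl_indic _ _ _ mu _ mD (fun=> A)) //; last first.
  by move=> m_lt0; move: m0; rewrite leNgt m_lt0.
apply: ge0_le_integral_nonmeasurable => x Dx; first by rewrite lee_fin mulr_ge0.
rewrite lee_fin indicE; case: (boolP (x \in A)) => [/set_mem Ax|_].
  by rewrite mulr1 Ag.
by rewrite mulr0 Dg.
Qed.

Lemma lebesgue_stieltjes_measure_itv_oc (F : cumulative R R) p q : p <= q ->
  lebesgue_stieltjes_measure F `]p, q] = (F q - F p)%:E.
Proof.
move=> pq; rewrite /lebesgue_stieltjes_measure /measure_extension.
by rewrite measurable_mu_extE/= ?wlength_itv_bnd//; exact: is_ocitv.
Qed.

Lemma cumulative_left_approx (F : cumulative R R) s e :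
  lebesgue_stieltjes_measure F [set s] = 0%E -> 0 < e ->
  exists2 r0, r0 < s & forall r, r0 < r -> r <= s -> F s - F r <= e.
Proof.
set mu := lebesgue_stieltjes_measure F => mu_s e0.
pose A n := (`]s - n.+1%:R^-1, s]%classic : set R).
pose u n := F s - F (s - n.+1%:R^-1).
have muA : mu \o A = EFin \o u.
  by apply/funext => n /=; rewrite /mu lebesgue_stieltjes_measure_itv_oc// lerBlDr lerDl.
have : (mu \o A) n @[n --> \oo] --> mu [set s].
  rewrite set1_bigcap_oc; apply: nonincreasing_cvg_mu.
  - change (mu (A 0%N) < +oo)%E.
    by rewrite -[mu (A 0%N)]/((mu \o A) 0%N) muA /= ltry.
  - by move=> i; exact: measurable_itv.
  - by rewrite -set1_bigcap_oc; exact: measurable_set1.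
  - move=> n m nm; apply/subsetPset => x; rewrite /A /= !in_itv/= => /andP[sx ->].
    by rewrite andbT (le_lt_trans _ sx)// lerB// lef_pV2 ?ler_nat ?posrE.
rewrite muA mu_s => /fine_cvgP[_ u0].
have [N uN] : exists N, u N < e.
  by near \oo => N; exists N; near: N; exact: cvgr_lt u0 _ e0.
exists (s - N.+1%:R^-1) => [|r Nr rs]; first by rewrite ltrBlDr ltrDl.
apply: le_trans (ltW uN); rewrite /u lerB//.
exact/cumulative_is_nondecreasing/ltW.
Unshelve. all: by end_near. Qed.

Lemma le_esum_subset (T : choiceType) (I J : set T) (a : T -> \bar R) :
  I `<=` J -> (\esum_(i in I) a i <= \esum_(i in J) a i)%E.
Proof.
move=> IJ; apply: ge_ereal_sup => _ [X [fX XI] <-]; apply: ereal_sup_ubound.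
by exists X => //; split => //; exact: subset_trans XI IJ.
Qed.

Lemma finite_set_itv_ub (X : set R) s : finite_set X -> X `<=` `[0, s[ -> 0 < s ->
  exists2 r, r < s & forall x, X x -> x <= r.
Proof.
move=> fX Xs s0; exists (\big[Num.max/0]_(x <- fset_set X | x \in fset_set X) x).
  apply: bigmax_lt => // x; rewrite in_fset_set// => /set_mem/Xs.
  by rewrite /= in_itv/= => /andP[].
by move=> x Xx; apply: le_bigmax_seq; rewrite in_fset_set// mem_set.
Qed.

Lemma esum_itv_left_approx (a : R -> R) s e : 0 < s -> 0 < e ->
  (forall r, 0 <= r -> 0 <= a r) ->
  exists2 r1, r1 < s & forall r, r1 < r -> r <= s ->
    fine (\esum_(x in `[0, s[) (a x)%:E) - fine (\esum_(x in `[0, r[) (a x)%:E) <= e.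
Proof.
move=> s0 e0 a0; pose J t := \esum_(x in `[0, t[) (a x)%:E.
change (exists2 r1, r1 < s &
  forall r, r1 < r -> r <= s -> fine (J s) - fine (J r) <= e).
have J0 t : (0 <= J t)%E.
  by apply: esum_ge0 => x /=; rewrite in_itv/= lee_fin => /andP[/a0].
have [Jsf|Jsi] := boolP (J s \is a fin_num); last first.
  (* fine +oo = 0, so the bound is trivial when the sum diverges *)
  exists 0 => // r _ _; have -> : J s = +oo%E.
    by move: Jsi (J0 s); rewrite fin_numE negb_and !negbK => /orP[/eqP->|/eqP->].
  by rewrite /= sub0r (le_trans _ (ltW e0))// oppr_le0 fine_ge0.
have /ereal_sup_gt[_ [X [fX XI] <-] HX] : ((fine (J s) - e)%:E < J s)%E.
  by rewrite -(fineK Jsf) lte_fin ltrBlDr ltrDl.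
have [r1 r1s Hr1] := finite_set_itv_ub fX XI s0.
exists r1 => // r r1r rs.
have HXr : (\sum_(i \in X) (a i)%:E <= J r)%E.
  apply: esum_ge; exists X => //; split => // x Xx /=; rewrite in_itv/=.
  have := XI _ Xx; rewrite /= in_itv/= => /andP[-> _] /=.
  exact: le_lt_trans (Hr1 _ Xx) r1r.
have Jrs : (J r <= J s)%E.
  apply: le_esum_subset => x /=; rewrite !in_itv/= => /andP[-> xr] /=.
  exact: lt_le_trans xr rs.
have Jrf : J r \is a fin_num by rewrite ge0_fin_numE// (le_lt_trans Jrs)// ltey_eq Jsf.
move: (lt_le_trans HX HXr); rewrite -(fineK Jrf) lte_fin.
by rewrite ltrBlDr -ltrBlDl => /ltW.
Qed.

End MeasureFacts.

Section StieltjesNull.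
Context {R : realType}.
Variables (phi g : R -> R) (F : cumulative R R).
Hypotheses (nd_phi : nondecr0 phi) (F_phi : forall t, 0 <= t -> F t = rc_part phi t)
  (g_ge0 : forall s, 0 <= s -> 0 <= g s)
  (int_g0 : (\int[lebesgue_stieltjes_measure F]_(s in (`[0%R, +oo[ : set R)) (g s)%:E = 0)%E).

Lemma phi_rcE t : 0 <= t ->
  phi t = F t + fine (\esum_(s in `[0, t[) (Dplus phi s)%:E).
Proof. by move=> t0; rewrite F_phi// rc_partE subrK. Qed.

Lemma stieltjes_null_where_g_pos (A : set R) m :
  measurable A -> A `<=` `[0, +oo[ -> 0 < m -> (forall s, A s -> m <= g s) ->
  lebesgue_stieltjes_measure F A = 0%E.
Proof.
move=> mA A0 m0 Ag; apply/eqP; rewrite eq_le measure_ge0 andbT.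
rewrite -(@pmule_rle0 _ m%:E) ?lte_fin// -int_g0.
have mD : measurable (`[0%R, +oo[ : set R) by exact: measurable_itv.
apply: (@mul_measure_le_integral _ _ _ (lebesgue_stieltjes_measure F) _ A g m mD) => //.
  exact: ltW.
by move=> s /=; rewrite in_itv/= andbT => /g_ge0.
Qed.

Lemma phi_flat (w : R -> R) p q m :
  (forall t, 0 <= t -> \esum_(s in `[0, t]) (w s * Dplus phi s)%:E = 0%E) ->
  0 <= p -> p <= q -> 0 < m ->
  (forall s, p < s -> s <= q -> m <= g s) -> (forall s, p <= s -> s < q -> 0 < w s) ->
  phi q = phi p.
Proof.
move=> wD0 p0 pq m0 gm wpos; have q0 := le_trans p0 pq.
have Fqp : F q = F p.
  have : lebesgue_stieltjes_measure F `]p, q] = 0%E.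
    apply: (stieltjes_null_where_g_pos (measurable_itv _) _ m0).
    - by move=> s /=; rewrite !in_itv/= andbT => /andP[/ltW/(le_trans p0)].
    - by move=> s /=; rewrite in_itv/= => /andP[]; exact: gm.
  by rewrite lebesgue_stieltjes_measure_itv_oc// => -[/subr0_eq].
have Dphi0 s : p <= s -> s < q -> Dplus phi s = 0.
  move=> ps sq; have s0 := le_trans p0 ps.
  exact: (Dplus_eq0 nd_phi s0 (wpos s ps sq) (wD0 s s0)).
rewrite !phi_rcE// Fqp; congr (_ + fine _).
rewrite esum_mkcond [RHS]esum_mkcond; apply: eq_esum => s _.
rewrite !mem_setE !in_itv/=; case: (ltP s p) => [sp|ps]; first by rewrite (lt_le_trans sp pq).
by case: (ltP s q) => sq; rewrite ?andbF// andbT; case: ifP => // _; rewrite Dphi0.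
Qed.

Lemma phi_left_approx s e : 0 < s -> 0 < g s -> 0 < e ->
  exists2 r0, r0 < s & forall r, r0 < r -> r <= s -> 0 <= r -> phi s - phi r <= e.
Proof.
move=> s0 gs e0; have e20 : 0 < e / 2 by rewrite divr_gt0.
have mu_s : lebesgue_stieltjes_measure F [set s] = 0%E.
  apply: (stieltjes_null_where_g_pos (measurable_set1 s) _ gs) => [x /= ->|x -> //].
  by rewrite in_itv/= (ltW s0).
have [r0 r0s HF] := cumulative_left_approx mu_s e20.
have [r1 r1s HJ] := esum_itv_left_approx s0 e20 (fun r r0 => Dplus_ge0 nd_phi r0).
exists (Num.max r0 r1) => [|r]; first by rewrite gt_max r0s.
rewrite gt_max => /andP[r0r r1r] rs r_ge0.
rewrite !phi_rcE ?(ltW s0)// opprD addrACA (splitr e) lerD//; last exact: HJ.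
exact: HF.
Qed.

End StieltjesNull.

Section RightLimits.
Context {R : realType}.
Implicit Types (f g : R -> R) (s t : R).

Lemma regulated_cvg_at_right f s : regulated f -> 0 <= s -> cvg (f x @[x --> s^'+]).
Proof. by move=> [_ +] s0; apply. Qed.

Lemma near_at_right_itv (P : R -> Prop) t T : t < T ->
  (forall r, t < r -> r < T -> P r) -> \forall r \near t^'+, P r.
Proof.
move=> tT HP; near=> r; apply: HP; first by near: r; exact: nbhs_right_gt.
by near: r; exact: nbhs_right_lt.
Unshelve. all: by end_near. Qed.

Lemma rlimB_ge f g s B : cvg (f x @[x --> s^'+]) -> cvg (g x @[x --> s^'+]) ->
  (\forall r \near s^'+, B <= f r - g r) -> B <= rlim f s - rlim g s.
Proof. by move=> cf cg fgB; rewrite /rlim -limB//; apply: limr_ge => //; exact: is_cvgB. Qed.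

Lemma rlimB_le f g s B : cvg (f x @[x --> s^'+]) -> cvg (g x @[x --> s^'+]) ->
  (\forall r \near s^'+, f r - g r <= B) -> rlim f s - rlim g s <= B.
Proof. by move=> cf cg fgB; rewrite /rlim -limB//; apply: limr_le => //; exact: is_cvgB. Qed.

Lemma rlimB_near (h f g : R -> R) s : cvg (f x @[x --> s^'+]) -> cvg (g x @[x --> s^'+]) ->
  (\forall r \near s^'+, h r = f r - g r) -> rlim h s = rlim f s - rlim g s.
Proof.
move=> cf cg hfg; rewrite /rlim; apply: cvg_lim => //.
by apply: cvg_trans (cvgB cf cg); apply: near_eq_cvg; apply: filterS hfg => r ->.
Qed.

Lemma rlim_le_regulated f g s : regulated f -> regulated g -> 0 <= s ->
  (forall r, 0 <= r -> f r <= g r) -> 0 <= rlim g s - rlim f s.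
Proof.
move=> rf rg s0 fg; apply: rlimB_ge; [exact: regulated_cvg_at_right..|].
near=> r; have sr : s < r by near: r; exact: nbhs_right_gt.
by rewrite subr_ge0 fg// (le_trans s0 (ltW sr)).
Unshelve. all: by end_near. Qed.

Lemma rlim_dist_le f g s T B : regulated f -> regulated g -> 0 <= s -> s < T ->
  (forall r, 0 <= r -> r < T -> `|f r - g r| <= B) -> `|rlim f s - rlim g s| <= B.
Proof.
move=> rf rg s0 sT fgB; have cf := regulated_cvg_at_right rf s0.
have cg := regulated_cvg_at_right rg s0.
have near_fgB : \forall r \near s^'+, `|f r - g r| <= B.
  apply: (@near_at_right_itv (fun r => `|f r - g r| <= B) _ _ sT) => r sr rT.
  exact: fgB (le_trans s0 (ltW sr)) rT.
rewrite ler_norml rlimB_le ?andbT//; last by apply: filterS near_fgB => r /ler_normlP[].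
by apply: rlimB_ge => //; apply: filterS near_fgB => r; rewrite ler_norml => /andP[].
Qed.

End RightLimits.

(* Conditions (iv) and (v) in the form used below: phi1 is constant on intervals where
   x and its right limit stay away from l, has no atom at the points s > 0 where both
   do, and jumps to the right only where x s = u s; symmetrically for phi2. *)
Record RP_decomposition {R : realType} (y l u x k phi1 phi2 : R -> R) : Prop := {
  RP_xE : forall t, 0 <= t -> x t = y t + k t;
  RP_kE : forall t, 0 <= t -> k t = phi1 t - phi2 t;
  RP_bounds : forall t, 0 <= t -> l t <= x t <= u t;
  RP_nd1 : nondecr0 phi1;
  RP_nd2 : nondecr0 phi2;
  RP_phi1_0 : phi1 0 = 0;
  RP_phi2_0 : phi2 0 = 0;
  RP_flat1 : forall p q m, 0 <= p -> p <= q -> 0 < m ->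
    (forall s, p < s -> s <= q -> m <= x s - l s) ->
    (forall s, p <= s -> s <= q -> m <= rlim x s - rlim l s) -> phi1 q = phi1 p;
  RP_flat2 : forall p q m, 0 <= p -> p <= q -> 0 < m ->
    (forall s, p < s -> s <= q -> m <= u s - x s) ->
    (forall s, p <= s -> s <= q -> m <= rlim u s - rlim x s) -> phi2 q = phi2 p;
  RP_left1 : forall s e, 0 < s -> 0 < x s - l s -> 0 < rlim x s - rlim l s -> 0 < e ->
    exists2 r0, r0 < s & forall r, r0 < r -> r <= s -> 0 <= r -> phi1 s - phi1 r <= e;
  RP_left2 : forall s e, 0 < s -> 0 < u s - x s -> 0 < rlim u s - rlim x s -> 0 < e ->
    exists2 r0, r0 < s & forall r, r0 < r -> r <= s -> 0 <= r -> phi2 s - phi2 r <= e;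
  RP_jump1 : forall s, 0 <= s -> 0 < u s - x s -> Dplus phi1 s = 0;
  RP_jump2 : forall s, 0 <= s -> 0 < x s - l s -> Dplus phi2 s = 0 }.

Section Decomposition.
Context {R : realType}.

Lemma RP_solution_decomposition (y l u x k : R -> R) :
  regulated l -> regulated u -> is_RP_solution y l u x k ->
  exists phi1 phi2, RP_decomposition y l u x k phi1 phi2.
Proof.
move=> rl ru [rx [_ [phi1 [phi2 [xk [lxu [[nd1 [nd2 [phi1_0 phi2_0]]]
  [[F1 [F1E [_ int1]]] [[F2 [F2E [_ int2]]] jumps]]]]]]]]].
have gap1 s : 0 <= s -> 0 <= Num.min (x s - l s) (rlim x s - rlim l s).
  move=> s0; rewrite le_min subr_ge0 (rlim_le_regulated rl rx s0) ?andbT.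
    by case/andP: (lxu s s0).
  by move=> r /lxu/andP[].
have gap2 s : 0 <= s -> 0 <= Num.min (u s - x s) (rlim u s - rlim x s).
  move=> s0; rewrite le_min subr_ge0 (rlim_le_regulated rx ru s0) ?andbT.
    by case/andP: (lxu s s0).
  by move=> r /lxu/andP[].
exists phi1, phi2; split => //.
- by move=> t /xk[].
- by move=> t /xk[].
- move=> p q m p0 pq m0 xm rxm.
  apply: (phi_flat nd1 F1E gap1 int1 (fun t t0 => (jumps t t0).1) p0 pq m0).
    by move=> s ps sq; rewrite le_min xm// rxm ?(ltW ps).
  by move=> s ps sq; apply: lt_le_trans m0 (rxm _ ps (ltW sq)).
- move=> p q m p0 pq m0 xm rxm.
  apply: (phi_flat nd2 F2E gap2 int2 (fun t t0 => (jumps t t0).2.2.1) p0 pq m0).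
    by move=> s ps sq; rewrite le_min xm// rxm ?(ltW ps).
  by move=> s ps sq; apply: lt_le_trans m0 (rxm _ ps (ltW sq)).
- by move=> s e s0 xl rxl; apply: (phi_left_approx nd1 F1E gap1 int1 s0); rewrite lt_min xl.
- by move=> s e s0 xl rxl; apply: (phi_left_approx nd2 F2E gap2 int2 s0); rewrite lt_min xl.
- by move=> s s0 ux; exact: (Dplus_eq0 nd1 s0 ux (jumps s s0).2.1).
- by move=> s s0 xl; exact: (Dplus_eq0 nd2 s0 xl (jumps s s0).2.2.2).
Qed.

Variables (y l u x k phi1 phi2 : R -> R).
Hypothesis S : RP_decomposition y l u x k phi1 phi2.

Lemma RP_rlim_kE t : 0 <= t -> rlim k t = rlim phi1 t - rlim phi2 t.
Proof.
move=> t0; apply: rlimB_near; [exact: nondecr0_cvg_at_right (RP_nd1 S) t0|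
  exact: nondecr0_cvg_at_right (RP_nd2 S) t0|].
near=> r; have tr : t < r by near: r; exact: nbhs_right_gt.
exact: RP_kE S _ (le_trans t0 (ltW tr)).
Unshelve. all: by end_near. Qed.

Lemma RP_rlim_xE t : regulated x -> regulated y -> 0 <= t ->
  rlim k t = rlim x t - rlim y t.
Proof.
move=> rx ry t0; apply: rlimB_near; [exact: regulated_cvg_at_right..|].
near=> r; have tr : t < r by near: r; exact: nbhs_right_gt.
by rewrite (RP_xE S (le_trans t0 (ltW tr))) addrC addKr.
Unshelve. all: by end_near. Qed.

End Decomposition.

Section OneSidedBound.
Context {R : realType}.
Variables (y yt l lt u ut x k xt kt phi1 phi2 psi1 psi2 : R -> R) (T a b c : R).
Hypotheses (ry : regulated y) (ryt : regulated yt) (rl : regulated l) (rlt : regulated lt)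
  (ru : regulated u) (rut : regulated ut) (rx : regulated x) (rxt : regulated xt).
Hypotheses (S : RP_decomposition y l u x k phi1 phi2)
  (St : RP_decomposition yt lt ut xt kt psi1 psi2).
Hypotheses (T0 : 0 < T)
  (ya : forall s, 0 <= s -> s < T -> `|y s - yt s| <= a)
  (lb : forall s, 0 <= s -> s < T -> `|l s - lt s| <= b)
  (uc : forall s, 0 <= s -> s < T -> `|u s - ut s| <= c).

Local Notation dk s := (k s - kt s).
Local Notation K := (a + b + c).

Lemma gaps_of_large_dk s d : 0 <= s -> s < T -> K + d < dk s ->
  d < x s - l s /\ d < ut s - xt s.
Proof.
move=> s0 sT hs; have := ya s0 sT; have := lb s0 sT; have := uc s0 sT.
rewrite !ler_norml; have := RP_xE S s0; have := RP_xE St s0.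
have /andP[? ?] := RP_bounds S s0; have /andP[? ?] := RP_bounds St s0.
move=> ? ? /andP[? ?] /andP[? ?] /andP[? ?]; split; lra.
Qed.

Lemma rlim_gaps_of_large_dk s t d : 0 <= s -> s < t -> t < T ->
  (forall r, s < r -> r <= t -> K + d < dk r) ->
  d <= rlim x s - rlim l s /\ d <= rlim ut s - rlim xt s.
Proof.
move=> s0 st tT hr.
have gaps : \forall r \near s^'+, d < x r - l r /\ d < ut r - xt r.
  apply: (@near_at_right_itv _ (fun r => d < x r - l r /\ d < ut r - xt r) _ _ st).
  move=> r sr rt; apply: gaps_of_large_dk (le_trans s0 (ltW sr)) (lt_trans rt tT) _.
  exact: hr sr (ltW rt).
by split; apply: rlimB_ge; try exact: regulated_cvg_at_right;
  apply: filterS gaps => r [/ltW ? /ltW ?].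
Qed.

Lemma rlim_gaps_pos_of_large_dk t d : 0 <= t -> t < T -> 0 < d -> K + d < dk t ->
  0 < rlim x t - rlim l t /\ 0 < rlim ut t - rlim xt t.
Proof.
move=> t0 tT d0 ht; have [xl uxt] := gaps_of_large_dk t0 tT ht.
(* dk only jumps up at t, while x_{t+} = l_{t+} or xt_{t+} = ut_{t+} would make its
   right limit at most K *)
have jump_t : dk t <= rlim k t - rlim kt t.
  have := RP_jump2 S t0 (lt_trans d0 xl); have := RP_jump1 St t0 (lt_trans d0 uxt).
  have := Dplus_ge0 (RP_nd1 S) t0; have := Dplus_ge0 (RP_nd2 St) t0.
  rewrite /Dplus (RP_rlim_kE S t0) (RP_rlim_kE St t0) (RP_kE S t0) (RP_kE St t0); lra.
rewrite (RP_rlim_xE S rx ry t0) (RP_rlim_xE St rxt ryt t0) in jump_t.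
have := rlim_dist_le ry ryt t0 tT ya; have := rlim_dist_le rl rlt t0 tT lb.
have := rlim_dist_le ru rut t0 tT uc; rewrite !ler_norml.
have := rlim_le_regulated rlt rxt t0 (fun r r0 => (andP (RP_bounds St r0)).1).
have := rlim_le_regulated rx ru t0 (fun r r0 => (andP (RP_bounds S r0)).2).
move=> ? ? /andP[? ?] /andP[? ?] /andP[? ?]; rewrite !ltNge; split; apply/negP => ?; lra.
Qed.

Lemma dk_nonincreasing p q m d : 0 <= p -> p <= q -> q < T -> 0 < m -> m <= d ->
  (forall s, p < s -> s <= q -> K + d < dk s) ->
  (forall s, p <= s -> s <= q -> m <= rlim x s - rlim l s /\ m <= rlim ut s - rlim xt s) ->
  dk q <= dk p.
Proof.
move=> p0 pq qT m0 md hs rgaps; have q0 := le_trans p0 pq.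
have gaps s : p < s -> s <= q -> m <= x s - l s /\ m <= ut s - xt s.
  move=> ps sq; have [? ?] := gaps_of_large_dk (le_trans p0 (ltW ps))
    (le_lt_trans sq qT) (hs s ps sq).
  by split; apply: le_trans md (ltW _).
have phi1E : phi1 q = phi1 p.
  apply: (RP_flat1 S p0 pq m0) => s ps sq; first exact: (gaps s ps sq).1.
  exact: (rgaps s ps sq).1.
have psi2E : psi2 q = psi2 p.
  apply: (RP_flat2 St p0 pq m0) => s ps sq; first exact: (gaps s ps sq).2.
  exact: (rgaps s ps sq).2.
have := RP_nd2 S p0 pq; have := RP_nd1 St p0 pq.
rewrite (RP_kE S p0) (RP_kE St p0) (RP_kE S q0) (RP_kE St q0) phi1E psi2E; lra.
Qed.

Lemma dk_le_of_left_approach s d : 0 < s -> s < T -> 0 <= d ->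
  0 < rlim x s - rlim l s -> 0 < rlim ut s - rlim xt s ->
  (forall r0, r0 < s -> exists2 r, [/\ r0 < r, 0 <= r & r <= s] & dk r <= K + d) ->
  dk s <= K + d.
Proof.
move=> s0 sT d0 rxl ruxt approach; rewrite leNgt; apply/negP => hs.
pose e := (dk s - (K + d)) / 4; have e0 : 0 < e by rewrite divr_gt0 ?subr_gt0.
have [xl uxt] := gaps_of_large_dk (ltW s0) sT hs.
have [r1 r1s H1] := RP_left1 S s0 (le_lt_trans d0 xl) rxl e0.
have [r2 r2s H2] := RP_left2 St s0 (le_lt_trans d0 uxt) ruxt e0.
have r12s : Num.max r1 r2 < s by rewrite gt_max r1s.
have [r [+ r0 rs] hr] := approach _ r12s; rewrite gt_max => /andP[r1r r2r].
have := H1 r r1r rs r0; have := H2 r r2r rs r0.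
have := RP_nd2 S r0 rs; have := RP_nd1 St r0 rs; move: hs hr.
rewrite /e (RP_kE S r0) (RP_kE St r0) (RP_kE S (ltW s0)) (RP_kE St (ltW s0)); lra.
Qed.

Lemma dk_at0 : dk 0 = 0.
Proof.
rewrite (RP_kE S (lexx 0)) (RP_kE St (lexx 0)) (RP_phi1_0 S) (RP_phi2_0 S).
by rewrite (RP_phi1_0 St) (RP_phi2_0 St) !subrr.
Qed.

Lemma dk_le t : 0 <= t -> t < T -> dk t <= K.
Proof.
move=> t0 tT; rewrite leNgt; apply/negP => htK.
have [d d0 htd] : exists2 d, 0 < d & K + d < dk t.
  by exists ((dk t - K) / 2); lra.
pose E := [set r | 0 <= r /\ r <= t /\ dk r <= K + d].
have K0 : 0 <= K.
  have := ya (lexx 0) T0; have := lb (lexx 0) T0; have := uc (lexx 0) T0.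
  rewrite !ler_norml; lra.
have E0 : E 0 by split => //; split => //; rewrite dk_at0; lra.
have hsE : has_sup E by split; [exists 0 | exists t => r [_ []]].
pose sg := sup E.
have sg0 : 0 <= sg by exact: sup_upper_bound.
have sgt : sg <= t by apply: ge_sup; [exists 0 | move=> r [_ []]].
have dk_gt r : sg < r -> r <= t -> K + d < dk r.
  move=> sgr rt; rewrite ltNge; apply/negP => hr.
  suff : r <= sg by rewrite leNgt sgr.
  by apply: sup_upper_bound => //; split; [exact: le_trans sg0 (ltW sgr)|].
have [rxl_t ruxt_t] := rlim_gaps_pos_of_large_dk t0 tT d0 htd.
pose m := Num.min d (Num.min (rlim x t - rlim l t) (rlim ut t - rlim xt t)).
have m0 : 0 < m by rewrite !lt_min d0 rxl_t.
have md : m <= d by rewrite ge_min lexx.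
have rgaps s : sg <= s -> s <= t ->
    m <= rlim x s - rlim l s /\ m <= rlim ut s - rlim xt s.
  move=> sgs; rewrite le_eqVlt => /orP[/eqP->|st]; first by rewrite !ge_min !lexx !orbT.
  have [? ?] := rlim_gaps_of_large_dk (le_trans sg0 sgs) st tT
    (fun r sr rt => dk_gt r (le_lt_trans sgs sr) rt).
  by split; exact: le_trans md _.
have dk_sg : dk sg <= K + d.
  have [->|sg_pos] : sg = 0 \/ 0 < sg by rewrite lt_neqAle sg0 andbT; case: eqVneq; auto.
    by rewrite dk_at0; lra.
  have [rx_sg rut_sg] := rgaps sg (lexx _) sgt.
  apply: (dk_le_of_left_approach sg_pos (le_lt_trans sgt tT) (ltW d0)
    (lt_le_trans m0 rx_sg) (lt_le_trans m0 rut_sg)) => r0 r0s.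
  have [r Er r0r] : exists2 r, E r & sg - (sg - r0) < r.
    by apply: sup_adherent => //; rewrite subr_gt0.
  have [r_ge0 [_ hr]] := Er; exists r => //.
  by split=> //; [rewrite opprB addrC subrK in r0r | exact: sup_upper_bound].
have := dk_nonincreasing sg0 sgt tT m0 md dk_gt rgaps; lra.
Qed.

End OneSidedBound.

Lemma RP_solutions_dist_le (R : realType) (y yt l lt u ut x k xt kt : R -> R) (T a b c : R) :
  regulated y -> regulated yt -> regulated l -> regulated lt ->
  regulated u -> regulated ut ->
  is_RP_solution y l u x k -> is_RP_solution yt lt ut xt kt -> 0 < T ->
  (forall s, 0 <= s -> s < T -> `|y s - yt s| <= a) ->
  (forall s, 0 <= s -> s < T -> `|l s - lt s| <= b) ->
  (forall s, 0 <= s -> s < T -> `|u s - ut s| <= c) ->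
  forall s, 0 <= s -> s < T ->
    `|k s - kt s| <= a + b + c /\ `|x s - xt s| <= a + (a + b + c).
Proof.
move=> ry ryt rl rlt ru rut sol solt T0 ya lb uc s s0 sT.
have [phi1 [phi2 S]] := RP_solution_decomposition rl ru sol.
have [psi1 [psi2 St]] := RP_solution_decomposition rlt rut solt.
have k_dist : `|k s - kt s| <= a + b + c.
  rewrite ler_norml (dk_le ry ryt rl rlt ru rut sol.1 solt.1 S St T0 ya lb uc s0 sT).
  rewrite andbT lerNl opprB.
  by apply: (dk_le ryt ry rlt rl rut ru solt.1 sol.1 St S T0 _ _ _ s0 sT) => r r0 rT;
    rewrite distrC; [exact: ya | exact: lb | exact: uc].
split=> //; rewrite (RP_xE S s0) (RP_xE St s0) opprD addrACA.
exact: le_trans (ler_normD _ _) (lerD (ya s s0 sT) k_dist).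
Qed.

Section SupNorm.
Context {R : realType}.
Variable T : R.
Hypothesis T0 : 0 < T.

Lemma supnT_ub (f : R -> R) s : 0 <= s -> s < T -> (`|f s|%:E <= supnT T f)%E.
Proof.
by move=> s0 sT; apply: ereal_sup_ubound; exists s => //=; rewrite in_itv/= s0 sT.
Qed.

Lemma supnT_ge0 (f : R -> R) : (0 <= supnT T f)%E.
Proof. exact: le_trans (supnT_ub f (lexx 0) T0). Qed.

Lemma supnT_le_lin (f g1 g2 g3 : R -> R) C : 0 < C ->
  (forall a b c, (forall s, 0 <= s -> s < T -> `|g1 s| <= a) ->
    (forall s, 0 <= s -> s < T -> `|g2 s| <= b) ->
    (forall s, 0 <= s -> s < T -> `|g3 s| <= c) ->
    forall s, 0 <= s -> s < T -> `|f s| <= C * (a + b + c)) ->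
  (supnT T f <= C%:E * (supnT T g1 + supnT T g2 + supnT T g3))%E.
Proof.
move=> C0 fC; set G := (_ + _ + _)%E.
have [Gfin|Ginf] := boolP (G \is a fin_num); last first.
  have -> : G = +oo%E.
    have G0 : (0 <= G)%E by rewrite !adde_ge0// supnT_ge0.
    by move: Ginf; rewrite ge0_fin_numE// ltey => /negbNE/eqP.
  by rewrite mulry gtr0_sg// mul1e leey.
move: Gfin; rewrite /G !fin_numD => /andP[/andP[g1f g2f] g3f].
rewrite -(fineK g1f) -(fineK g2f) -(fineK g3f) -!EFinD -EFinM.
apply: ge_ereal_sup => ? [s /=]; rewrite in_itv/= => /andP[s0 sT] <-; rewrite lee_fin.
by apply: fC s0 sT => r r0 rT; rewrite -lee_fin ?fineK//; exact: supnT_ub.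
Qed.

End SupNorm.

Theorem proposition2 (R : realType) (y yt l lt u ut x k xt kt : R -> R) (T : R) :
  regulated y -> regulated yt -> regulated l -> regulated lt ->
  regulated u -> regulated ut ->
  (forall t, 0 <= t -> l t <= u t) -> (forall t, 0 <= t -> lt t <= ut t) ->
  l 0 <= y 0 <= u 0 -> lt 0 <= yt 0 <= ut 0 ->
  (forall t : R, 0 <= t -> (0 < ereal_inf [set (u s - l s)%:E | s in `[0%R, t]])%E) ->
  (forall t : R, 0 <= t -> (0 < ereal_inf [set (ut s - lt s)%:E | s in `[0%R, t]])%E) ->
  is_RP_solution y l u x k -> is_RP_solution yt lt ut xt kt ->
  0 < T ->
  (supnT T (k \- kt)%R <=
     2%:E * (supnT T (y \- yt)%R + supnT T (l \- lt)%R + supnT T (u \- ut)%R))%E /\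
  (supnT T (x \- xt)%R <=
     3%:E * (supnT T (y \- yt)%R + supnT T (l \- lt)%R + supnT T (u \- ut)%R))%E.
Proof.
(* The hypotheses on the barriers and on y 0, yt 0 only serve the existence of the
   solutions, which are given here. *)
move=> ry ryt rl rlt ru rut _ _ _ _ _ _ sol solt T0.
have dist := RP_solutions_dist_le ry ryt rl rlt ru rut sol solt T0.
split; apply: supnT_le_lin => // a b c ya lb uc s s0 sT /=;
  have [k_dist x_dist] := dist a b c ya lb uc s s0 sT;
  have := ya s s0 sT; have := lb s s0 sT; have := uc s s0 sT;
  move: k_dist x_dist; rewrite !ler_norml; lra.
Qed.
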